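(* Let $\lambda>0$ and $\varepsilon>0$ be reals and $k>8$ an integer such that $\cos(2\pi/k)-\sin(2\pi/k)=\frac{\lambda+\varepsilon+1}{(\lambda+1)(\varepsilon+1)}$. Let $G=(V,E)$ be a $\lambda$-civilized unit disk graph and let $YY_k$ be its Yao-Yao graph. Then $YY_k$ has maximum degree at most $2k$, is a length $(1+\varepsilon)$-spanner of $G$, and has power stretch factor $(1+\varepsilon)^\beta$ with respect to $G$.
   Context: Unit disk graph (UDG): $V$ is a finite set of points in the Euclidean plane and $E=\{uv: |uv|\le 1\}$, with $|uv|$ Euclidean distance; $G$ is connected. $G$ is $\lambda$-civilized if no two nodes are at distance smaller than $\lambda$. A subgraph $H$ of $G$ on the same vertex set is a length $t$-spanner if for all $u,v$ the length of a shortest $uv$-path in $H$ is at most $t$ times that in $G$. $\beta$ is a fixed real constant (path loss gradient) between 2 and 5; the power of a path is $\sum |e|^\beta$ over its edges $e$; $H$ has power stretch factor $\rho$ if for all $u,v$ the power of a minimum-power $uv$-path in $H$ is at most $\rho$ times the power of a minimum-power $uv$-path in $G$. Cones: with $\theta=2\pi/k$, at each point $u$ the plane is partitioned into $k$ half-open half-closed cones with apex $u$ of angle $\theta$, bounded by $k$ equally spaced rays (same directions at every node); $K_u(v)$ is the cone with apex $u$ containing $v$; an edge $uw$ lies in $K_u$ if $w\in K_u$. Identifiers: nodes have distinct IDs; $\mathrm{ID}(\overrightarrow{uv})=(|uv|,\mathrm{ID}(u),\mathrm{ID}(v))$ compared lexicographically; $\mathrm{ID}(uv)=\min\{\mathrm{ID}(\overrightarrow{uv}),\mathrm{ID}(\overrightarrow{vu})\}$.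 Yao step: for each node $u$ and each cone $K_u$ containing some edge of $E$ incident to $u$, add to $E_Y$ the directed edge $\overrightarrow{uv}$ where $uv$ is the edge of $E$ in $K_u$ with lowest $\mathrm{ID}(uv)$. Reverse Yao step: starting from $E_{YY}=E_Y$, for each node $v$ and each cone $K_v$, among edges $\overrightarrow{uv}\in E_Y$ with $u\in K_v$ keep only the one of smallest ID. $YY_k=(V,E_{YY})$, viewed as undirected. *)

From Stdlib Require Import Reals Lra List ClassicalEpsilon.
Import ListNotations.
Open Scope R_scope.

Definition point : Type := (R * R)%type.

Definition dist (u v : point) : R :=
  sqrt ((fst u - fst v) ^ 2 + (snd u - snd v) ^ 2).

Definition udg_edge (V : list point) (u v : point) : Prop :=
  In u V /\ In v V /\ u <> v /\ dist u v <= 1.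

Fixpoint chain (E : point -> point -> Prop) (x : point) (l : list point) : Prop :=
  match l with
  | nil => True
  | y :: l' => E x y /\ chain E y l'
  end.

(* A uv-path in E: the walk u :: p ending at v. *)
Definition is_path (E : point -> point -> Prop) (u v : point) (p : list point) : Prop :=
  chain E u p /\ last p u = v.

Fixpoint path_cost (c : point -> point -> R) (x : point) (l : list point) : R :=
  match l with
  | nil => 0
  | y :: l' => c x y + path_cost c y l'
  end.

Definition path_length (u : point) (p : list point) : R := path_cost dist u p.

Definition path_power (beta : R) (u : point) (p : list point) : R :=
  path_cost (fun x y => Rpower (dist x y) beta) u p.

Definition connected (V : list point) : Prop :=
  forall u v, In u V -> In v V -> exists p, is_path (udg_edge V) u v p.

Definition civilized (lambda : R) (V : list point) : Prop :=
  forall u v, In u V -> In v V -> u <> v -> lambda <= dist u v.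

(* Cones: k cones of angle theta = 2 PI / k, bounded by rays of directions
   alpha + i*theta (same directions at every node). *)
Definition in_cone (k : nat) (alpha : R) (u : point) (i : nat) (w : point) : Prop :=
  (i < k)%nat /\
  exists r phi, 0 < r /\
    alpha + INR i * (2 * PI / INR k) <= phi /\
    phi < alpha + INR (S i) * (2 * PI / INR k) /\
    fst w = fst u + r * cos phi /\ snd w = snd u + r * sin phi.

Definition same_cone (k : nat) (alpha : R) (u v w : point) : Prop :=
  exists i, in_cone k alpha u i v /\ in_cone k alpha u i w.

Definition triple : Type := (R * nat * nat)%type.

Definition lex_lt (a b : triple) : Prop :=
  let '(a1, a2, a3) := a in
  let '(b1, b2, b3) := b in
  a1 < b1 \/ (a1 = b1 /\ ((a2 < b2)%nat \/ (a2 = b2 /\ (a3 < b3)%nat))).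

Definition lex_le (a b : triple) : Prop := lex_lt a b \/ a = b.

Definition lex_min (a b : triple) : triple :=
  if excluded_middle_informative (lex_lt b a) then b else a.

Definition dID (ID : point -> nat) (u v : point) : triple := (dist u v, ID u, ID v).

Definition eID (ID : point -> nat) (u v : point) : triple :=
  lex_min (dID ID u v) (dID ID v u).

Definition yao_edge (V : list point) (k : nat) (alpha : R) (ID : point -> nat)
  (u v : point) : Prop :=
  udg_edge V u v /\
  forall w, udg_edge V u w -> same_cone k alpha u v w -> lex_le (eID ID u v) (eID ID u w).

Definition yy_dedge (V : list point) (k : nat) (alpha : R) (ID : point -> nat)
  (u v : point) : Prop :=
  yao_edge V k alpha ID u v /\
  forall w, yao_edge V k alpha ID w v -> same_cone k alpha v u w ->
    lex_le (eID ID u v) (eID ID w v).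

Definition yy_edge (V : list point) (k : nat) (alpha : R) (ID : point -> nat)
  (u v : point) : Prop :=
  yy_dedge V k alpha ID u v \/ yy_dedge V k alpha ID v u.

Definition max_degree_le (V : list point) (H : point -> point -> Prop) (d : nat) : Prop :=
  forall u, In u V -> forall L, NoDup L -> (forall v, In v L -> H u v) -> (length L <= d)%nat.

(* Length t-spanner: shortest uv-path length in H <= t * that in G
   (for every G-path p there is an H-path at most t times as long). *)
Definition length_spanner (V : list point) (H G : point -> point -> Prop) (t : R) : Prop :=
  forall u v, In u V -> In v V -> forall p, is_path G u v p ->
    exists q, is_path H u v q /\ path_length u q <= t * path_length u p.

Definition power_stretch (V : list point) (beta : R) (H G : point -> point -> Prop) (rho : R) : Prop :=
  forall u v, In u V -> In v V -> forall p, is_path G u v p ->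
    exists q, is_path H u v q /\ path_power beta u q <= rho * path_power beta u p.

(* Let theta = 2 PI / k and c = cos theta - sin theta.  If w lies in the cone of u that
   contains v and |uw| <= |uv|, the law of cosines with an angle below theta at u gives
   |wv| <= |uv| - c |uw|.  The spanner bound t = 1 + eps is proved edge by edge, by induction
   on edge length.  For an edge uv of G let uw be the Yao edge of u in the cone of v.  If uw
   survives the reverse Yao step, take uw followed by a YY path from w to v.  Otherwise a YY
   edge xw, with x in the cone of w containing u and |xw| <= |uw|, blocks it, and we go
   u ~> x -> w ~> v: the cone inequality at w makes ux shorter than uw by c |wx|, and since
   |wx| >= lambda this gain pays for the detour exactly when
   t (1 - c) <= lambda (t c - 1), which is what the choice of k guarantees.  Powers follow
   from sum |e|^beta <= (sum |e|)^beta for beta >= 1.  Degrees: a node keeps at most one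
   outgoing and one incoming YY edge per cone. *)

From Pilot Require Import Defs.
From Stdlib Require Import Reals Lra Lia List ZArith ClassicalEpsilon Classical.
Import ListNotations Defs.
Open Scope R_scope.

Lemma dist_sym (u v : point) : dist u v = dist v u.
Proof. unfold dist. f_equal. ring. Qed.

Lemma dist_nonneg (u v : point) : 0 <= dist u v.
Proof. apply sqrt_pos. Qed.

Lemma dist_pos (u v : point) : u <> v -> 0 < dist u v.
Proof.
  destruct u as [a b], v as [c d]; intros Hne. apply sqrt_lt_R0; simpl.
  pose proof (pow2_ge_0 (a - c)). pose proof (pow2_ge_0 (b - d)).
  destruct (Req_dec a c) as [->|Hac].
  - assert (Hbd : b - d <> 0) by (intros E; apply Hne; f_equal; lra).
    pose proof (Rsqr_pos_lt _ Hbd). unfold Rsqr in *. lra.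
  - assert (Hac' : a - c <> 0) by lra.
    pose proof (Rsqr_pos_lt _ Hac'). unfold Rsqr in *. lra.
Qed.

Lemma dist_polar (u v : point) (r phi : R) : 0 <= r ->
  fst v = fst u + r * cos phi -> snd v = snd u + r * sin phi -> dist u v = r.
Proof.
  intros Hr Hx Hy. unfold dist. rewrite Hx, Hy.
  replace (_ + _) with (r * r * ((sin phi)² + (cos phi)²)) by (unfold Rsqr; ring).
  rewrite sin2_cos2, Rmult_1_r. apply sqrt_square, Hr.
Qed.

Lemma trig_shift_2PI (x : R) (q : Z) :
  cos (x + 2 * IZR q * PI) = cos x /\ sin (x + 2 * IZR q * PI) = sin x.
Proof.
  destruct (Z_le_gt_dec 0 q) as [Hq|Hq].
  - rewrite <- (Z2Nat.id q Hq), <- INR_IZR_INZ. split; [apply cos_period|apply sin_period].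
  - replace q with (- Z.of_nat (Z.to_nat (- q)))%Z by lia.
    set (n := Z.to_nat (- q)). rewrite opp_IZR, <- INR_IZR_INZ.
    replace x with ((x + 2 * - INR n * PI) + 2 * INR n * PI) at 2 4 by ring.
    rewrite cos_period, sin_period. split; reflexivity.
Qed.

Lemma polar_exists (dx dy : R) : dx <> 0 \/ dy <> 0 ->
  exists r phi, 0 < r /\ dx = r * cos phi /\ dy = r * sin phi.
Proof.
  intros Hne.
  assert (Hp : 0 < dx * dx + dy * dy).
  { destruct Hne as [H|H]; pose proof (Rsqr_pos_lt _ H); unfold Rsqr in *; nra. }
  set (r := sqrt (dx * dx + dy * dy)).
  assert (Hr : 0 < r) by (apply sqrt_lt_R0; auto).
  assert (Hr2 : r * r = dx * dx + dy * dy) by (apply sqrt_sqrt; lra).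
  assert (Hb : -1 <= dx / r <= 1).
  { split; apply (Rmult_le_reg_r r); auto; unfold Rdiv; rewrite Rmult_assoc, Rinv_l; nra. }
  assert (Hs : sqrt (1 - (dx / r)²) = Rabs dy / r).
  { replace (1 - (dx / r)²) with ((Rabs dy / r)²).
    - apply sqrt_Rsqr. unfold Rdiv; apply Rmult_le_pos; [apply Rabs_pos|left; apply Rinv_0_lt_compat, Hr].
    - unfold Rsqr. replace (Rabs dy / r * (Rabs dy / r)) with (Rabs dy * Rabs dy / (r * r)) by (field; lra).
      rewrite <- Rabs_mult, Rabs_right by nra. replace (dx / r * (dx / r)) with (dx * dx / (r * r)) by (field; lra).
      rewrite Hr2. field. lra. }
  exists r.
  destruct (Rle_dec 0 dy) as [Hy|Hy].
  - exists (acos (dx / r)). rewrite cos_acos, sin_acos, Hs, Rabs_right by (auto; lra).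
    split; auto. split; field; lra.
  - exists (- acos (dx / r)). rewrite cos_neg, sin_neg, cos_acos, sin_acos, Hs, Rabs_left by (auto; lra).
    split; auto. split; field; lra.
Qed.

Lemma polar_unique (r1 r2 p1 p2 : R) : 0 < r1 -> 0 < r2 ->
  r1 * cos p1 = r2 * cos p2 -> r1 * sin p1 = r2 * sin p2 ->
  r1 = r2 /\ cos p1 = cos p2 /\ sin p1 = sin p2.
Proof.
  intros Hr1 Hr2 Hc Hs.
  assert (Hsq : r1 * r1 = r2 * r2).
  { pose proof (sin2_cos2 p1) as E1. pose proof (sin2_cos2 p2) as E2. unfold Rsqr in *.
    transitivity ((r1 * cos p1) * (r1 * cos p1) + (r1 * sin p1) * (r1 * sin p1)).
    - replace (_ + _) with (r1 * r1 * (sin p1 * sin p1 + cos p1 * cos p1)) by ring. rewrite E1. ring.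
    - rewrite Hc, Hs. replace (_ + _) with (r2 * r2 * (sin p2 * sin p2 + cos p2 * cos p2)) by ring.
      rewrite E2. ring. }
  assert (Hr : r1 = r2) by nra. subst r2.
  split; [reflexivity|split; apply (Rmult_eq_reg_l r1); lra].
Qed.

Lemma angle_eq_in_window (a b alpha : R) :
  alpha <= a < alpha + 2 * PI -> alpha <= b < alpha + 2 * PI ->
  cos a = cos b -> sin a = sin b -> a = b.
Proof.
  intros Ha Hb Hc Hs.
  assert (S0 : sin (a - b) = 0) by (rewrite sin_minus, Hc, Hs; ring).
  assert (C1 : cos (a - b) = 1) by (rewrite cos_minus, Hc, Hs, Rplus_comm; apply sin2_cos2).
  destruct (sin_eq_0_0 _ S0) as [m Hm].
  pose proof PI_RGT_0.
  assert (Hm' : (-2 < m < 2)%Z).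
  { split; apply lt_IZR; apply (Rmult_lt_reg_r PI); simpl; lra. }
  assert (Hcases : m = 0%Z \/ m = 1%Z \/ m = (-1)%Z) by lia.
  destruct Hcases as [E|[E|E]]; subst m; rewrite Hm in C1.
  - simpl in Hm. lra.
  - rewrite Rmult_1_l, cos_PI in C1. lra.
  - replace (IZR (-1) * PI) with (- PI) in C1 by (simpl; ring). rewrite cos_neg, cos_PI in C1. lra.
Qed.

Lemma angle_in_window (k : nat) (alpha phi0 : R) : (0 < k)%nat ->
  exists i phi, (i < k)%nat /\
    alpha + INR i * (2 * PI / INR k) <= phi < alpha + INR (S i) * (2 * PI / INR k) /\
    cos phi = cos phi0 /\ sin phi = sin phi0.
Proof.
  intros Hk.
  assert (HkR : 0 < INR k) by (apply lt_0_INR; auto).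
  set (th := 2 * PI / INR k).
  assert (Hth : 0 < th) by (unfold th; apply Rdiv_lt_0_compat; [pose PI_RGT_0; lra|auto]).
  assert (Hkth : INR k * th = 2 * PI) by (unfold th; field; lra).
  set (j := Int_part ((phi0 - alpha) / th)).
  destruct (base_Int_part ((phi0 - alpha) / th)) as [Hj1 Hj2]; fold j in Hj1, Hj2.
  assert (Hwin : IZR j * th <= phi0 - alpha < (IZR j + 1) * th).
  { replace (phi0 - alpha) with ((phi0 - alpha) / th * th) by (field; lra).
    split; [apply Rmult_le_compat_r|apply Rmult_lt_compat_r]; lra. }
  assert (HkZ : (0 < Z.of_nat k)%Z) by lia.
  set (q := (j / Z.of_nat k)%Z). set (i := (j mod Z.of_nat k)%Z).
  destruct (Z.mod_pos_bound j (Z.of_nat k) HkZ) as [Hi0 Hik]; fold i in Hi0, Hik.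
  assert (HjR : IZR j * th = 2 * PI * IZR q + IZR i * th).
  { rewrite (Z.div_mod j (Z.of_nat k)) by lia. fold q i.
    rewrite plus_IZR, mult_IZR, <- INR_IZR_INZ, <- Hkth. ring. }
  exists (Z.to_nat i), (phi0 + 2 * IZR (- q) * PI).
  destruct (trig_shift_2PI phi0 (- q)) as [Hc Hs].
  assert (HiR : INR (Z.to_nat i) = IZR i) by (rewrite INR_IZR_INZ, Z2Nat.id by lia; reflexivity).
  rewrite Hc, Hs, S_INR, HiR, opp_IZR. fold th.
  split; [lia|]. repeat split; lra.
Qed.

Lemma cone_exists (k : nat) (alpha : R) (u w : point) : (0 < k)%nat -> u <> w ->
  exists i, in_cone k alpha u i w.
Proof.
  intros Hk Huw.
  destruct (polar_exists (fst w - fst u) (snd w - snd u)) as [r [phi0 [Hr [Hx Hy]]]].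
  { destruct (Req_dec (fst w - fst u) 0); auto. destruct (Req_dec (snd w - snd u) 0); auto.
    exfalso; apply Huw. destruct u, w; simpl in *. f_equal; lra. }
  destruct (angle_in_window k alpha phi0 Hk) as [i [phi [Hi [Hphi [Hc Hs]]]]].
  exists i. split; auto. exists r, phi. rewrite Hc, Hs. repeat split; lra.
Qed.

Lemma in_cone_unique (k : nat) (alpha : R) (u : point) (i j : nat) (w : point) :
  in_cone k alpha u i w -> in_cone k alpha u j w -> i = j.
Proof.
  intros [Hi [r1 [p1 [Hr1 [A1 [A2 [X1 Y1]]]]]]] [Hj [r2 [p2 [Hr2 [B1 [B2 [X2 Y2]]]]]]].
  assert (HkR : 0 < INR k) by (apply lt_0_INR; lia).
  set (th := 2 * PI / INR k) in *.
  assert (Hth : 0 < th) by (unfold th; apply Rdiv_lt_0_compat; [pose PI_RGT_0; lra|auto]).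
  assert (Hkth : INR k * th = 2 * PI) by (unfold th; field; lra).
  assert (Ei : INR (S i) <= INR k) by (apply le_INR; lia).
  assert (Ej : INR (S j) <= INR k) by (apply le_INR; lia).
  pose proof (pos_INR i). pose proof (pos_INR j).
  destruct (polar_unique r1 r2 p1 p2) as [_ [Hc Hs]]; try lra.
  assert (Hp : p1 = p2) by (apply (angle_eq_in_window p1 p2 alpha); auto; split; nra).
  subst p2. rewrite S_INR in *.
  assert (Hij : INR i < INR (S j)) by (rewrite S_INR; nra).
  assert (Hji : INR j < INR (S i)) by (rewrite S_INR; nra).
  apply INR_lt in Hij, Hji. lia.
Qed.

Lemma same_cone_sym (k : nat) (alpha : R) (u a b : point) :
  same_cone k alpha u a b -> same_cone k alpha u b a.
Proof. intros [i [H1 H2]]. exists i; auto. Qed.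

Lemma same_cone_trans (k : nat) (alpha : R) (u a b c : point) :
  same_cone k alpha u a b -> same_cone k alpha u b c -> same_cone k alpha u a c.
Proof.
  intros [i [H1 H2]] [j [H3 H4]].
  rewrite (in_cone_unique k alpha u i j b H2 H3) in H1. exists j; auto.
Qed.

Lemma narrow_angle_dist_bound (r1 r2 p1 p2 th : R) :
  0 <= r2 <= r1 -> 0 < th <= PI -> Rabs (p1 - p2) < th ->
  sqrt ((r1 * cos p1 - r2 * cos p2) ^ 2 + (r1 * sin p1 - r2 * sin p2) ^ 2)
    <= r1 - (cos th - sin th) * r2.
Proof.
  intros Hr Hth Hp.
  assert (Hcos : cos th <= cos (p1 - p2)).
  { replace (cos (p1 - p2)) with (cos (Rabs (p1 - p2))).
    - left. apply cos_decreasing_1; try lra; apply Rabs_pos.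
    - destruct (Rcase_abs (p1 - p2)); [rewrite Rabs_left, cos_neg|rewrite Rabs_right]; auto. }
  assert (Hsin : 0 <= sin th) by (apply sin_ge_0; lra).
  assert (Hcos1 : cos th <= 1) by apply COS_bound.
  assert (Hpyth : (sin th) ^ 2 + (cos th) ^ 2 = 1) by (rewrite <- (sin2_cos2 th); unfold Rsqr; ring).
  set (c := cos th - sin th).
  assert (Hlaw : (r1 * cos p1 - r2 * cos p2) ^ 2 + (r1 * sin p1 - r2 * sin p2) ^ 2
                 = r1 * r1 + r2 * r2 - 2 * r1 * r2 * cos (p1 - p2)).
  { rewrite cos_minus.
    replace (_ + _) with (r1 * r1 * ((sin p1)² + (cos p1)²) + r2 * r2 * ((sin p2)² + (cos p2)²)
                          - 2 * r1 * r2 * (cos p1 * cos p2 + sin p1 * sin p2)) by (unfold Rsqr; ring).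
    rewrite !sin2_cos2. ring. }
  assert (Hpos : 0 <= r1 - c * r2).
  { assert (c * r2 <= 1 * r2) by (apply Rmult_le_compat_r; unfold c; lra). lra. }
  rewrite Hlaw, <- (sqrt_square (r1 - c * r2)) by exact Hpos.
  apply sqrt_le_1_alt.
  (* r2^2 (1 - c^2) = 2 r2^2 sin th cos th <= 2 r1 r2 sin th <= 2 r1 r2 (cos (p1 - p2) - c) *)
  assert (K1 : 2 * r2 * r2 * sin th * cos th <= 2 * r1 * r2 * sin th).
  { assert (Hrc : r2 * cos th <= r1) by (assert (r2 * cos th <= r2 * 1) by (apply Rmult_le_compat_l; lra); lra).
    apply (Rmult_le_compat_l (2 * r2 * sin th)) in Hrc; [nra|repeat apply Rmult_le_pos; lra]. }
  assert (K2 : 2 * r1 * r2 * sin th <= 2 * r1 * r2 * (cos (p1 - p2) - c)).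
  { assert (0 <= 2 * r1 * r2) by (repeat apply Rmult_le_pos; lra). unfold c. nra. }
  unfold c in *. nra.
Qed.

Lemma cone_angle_bounds (k : nat) : (2 <= k)%nat -> 0 < 2 * PI / INR k <= PI.
Proof.
  intros Hk.
  assert (HkR : 2 <= INR k) by (replace 2 with (INR 2) by (simpl; ring); apply le_INR; auto).
  pose proof PI_RGT_0.
  split; [apply Rdiv_lt_0_compat; lra|].
  apply (Rmult_le_reg_r (INR k)); [lra|].
  unfold Rdiv. rewrite Rmult_assoc, Rinv_l by lra. nra.
Qed.

Lemma cone_const_le1 (k : nat) : (2 <= k)%nat -> cos (2 * PI / INR k) - sin (2 * PI / INR k) <= 1.
Proof.
  intros Hk. destruct (cone_angle_bounds k Hk) as [H0 H1].
  pose proof (COS_bound (2 * PI / INR k)). pose proof (sin_ge_0 _ (Rlt_le _ _ H0) H1). lra.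
Qed.

Lemma cone_dist (k : nat) (alpha : R) (u v w : point) : (2 <= k)%nat ->
  same_cone k alpha u v w -> dist u w <= dist u v ->
  dist v w <= dist u v - (cos (2 * PI / INR k) - sin (2 * PI / INR k)) * dist u w.
Proof.
  intros Hk [i [[Hi [r1 [p1 [Hr1 [A1 [A2 [X1 Y1]]]]]]] [_ [r2 [p2 [Hr2 [B1 [B2 [X2 Y2]]]]]]]]] Hd.
  rewrite (dist_polar u v r1 p1), (dist_polar u w r2 p2) in * by lra.
  pose proof (cone_angle_bounds k Hk) as Hth.
  set (th := 2 * PI / INR k) in *.
  rewrite S_INR in A2, B2.
  replace (dist v w) with (sqrt ((r1 * cos p1 - r2 * cos p2) ^ 2 + (r1 * sin p1 - r2 * sin p2) ^ 2))
    by (unfold dist; rewrite X1, Y1, X2, Y2; f_equal; ring).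
  apply narrow_angle_dist_bound; try lra.
  apply Rabs_def1; lra.
Qed.

Lemma lex_total (a b : triple) : lex_lt a b \/ a = b \/ lex_lt b a.
Proof.
  destruct a as [[a1 a2] a3], b as [[b1 b2] b3]; simpl.
  destruct (Rtotal_order a1 b1) as [H|[ <- |H]]; [left; left; auto| |right; right; left; auto].
  destruct (Nat.lt_total a2 b2) as [H|[ <- |H]]; [left; right; auto| |right; right; right; auto].
  destruct (Nat.lt_total a3 b3) as [H|[ <- |H]]; [left; right; auto| |right; right; right; auto].
  auto.
Qed.

Lemma lex_lt_irrefl (a : triple) : ~ lex_lt a a.
Proof. destruct a as [[a1 a2] a3]; simpl. intros [H|[_ [H|[_ H]]]]; lra || lia. Qed.

Lemma lex_lt_trans (a b c : triple) : lex_lt a b -> lex_lt b c -> lex_lt a c.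
Proof.
  destruct a as [[a1 a2] a3], b as [[b1 b2] b3], c as [[c1 c2] c3]; simpl.
  intros [H|[E [H|[E2 H]]]] [H'|[E' [H'|[E2' H']]]]; subst;
  try (left; lra); right; split; auto; try (left; lia); right; split; auto; lia.
Qed.

Lemma lex_le_lt_trans (a b c : triple) : lex_le a b -> lex_lt b c -> lex_lt a c.
Proof. intros [H| ->] H'; auto. eapply lex_lt_trans; eauto. Qed.

Lemma lex_lt_le_trans (a b c : triple) : lex_lt a b -> lex_le b c -> lex_lt a c.
Proof. intros H [H'| <- ]; auto. eapply lex_lt_trans; eauto. Qed.

Lemma lex_le_antisym (a b : triple) : lex_le a b -> lex_le b a -> a = b.
Proof.
  intros [H|H] [H'|H']; auto.
  exfalso; apply (lex_lt_irrefl a); eapply lex_lt_trans; eauto.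
Qed.

Lemma not_lex_lt (a b : triple) : ~ lex_lt a b -> lex_le b a.
Proof. unfold lex_le. intros H. destruct (lex_total a b) as [H1|[H1|H1]]; auto; tauto. Qed.

Lemma lex_le_fst (a b : triple) : lex_le a b -> fst (fst a) <= fst (fst b).
Proof.
  destruct a as [[a1 a2] a3], b as [[b1 b2] b3]; unfold lex_le; simpl.
  intros [[H|[H _]]|H]; [lra|lra|injection H; intros; lra].
Qed.

Lemma eID_cases (ID : point -> nat) (u v : point) :
  eID ID u v = dID ID u v \/ eID ID u v = dID ID v u.
Proof. unfold eID, lex_min. destruct excluded_middle_informative; auto. Qed.

Lemma eID_sym (ID : point -> nat) (u v : point) : eID ID u v = eID ID v u.
Proof.
  unfold eID, lex_min.
  destruct excluded_middle_informative as [H1|H1], excluded_middle_informative as [H2|H2]; auto.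
  - exfalso; apply (lex_lt_irrefl (dID ID u v)); eapply lex_lt_trans; eauto.
  - destruct (lex_total (dID ID u v) (dID ID v u)) as [H|[H|H]]; tauto.
Qed.

Lemma eID_le_dist (ID : point -> nat) (a b c d : point) :
  lex_le (eID ID a b) (eID ID c d) -> dist a b <= dist c d.
Proof.
  assert (Hfst : forall x y, fst (fst (eID ID x y)) = dist x y).
  { intros x y. destruct (eID_cases ID x y) as [-> | ->]; simpl; auto using dist_sym. }
  intros H. apply lex_le_fst in H. rewrite !Hfst in H. exact H.
Qed.

Lemma eID_inj (V : list point) (ID : point -> nat) (u v1 v2 : point) :
  (forall u v, In u V -> In v V -> ID u = ID v -> u = v) ->
  In u V -> In v1 V -> In v2 V -> u <> v1 -> u <> v2 ->
  eID ID u v1 = eID ID u v2 -> v1 = v2.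
Proof.
  intros Hinj H0 H1 H2 N1 N2 E.
  destruct (eID_cases ID u v1) as [A|A]; destruct (eID_cases ID u v2) as [B|B];
  rewrite A, B in E; unfold dID in E; injection E; intros;
  first [ apply Hinj; auto; congruence
        | exfalso; apply N1; apply Hinj; auto; congruence
        | exfalso; apply N2; apply Hinj; auto; congruence ].
Qed.

Lemma list_argmin {A : Type} (P : A -> Prop) (f : A -> triple) (L : list A) :
  (exists x, In x L /\ P x) ->
  exists m, In m L /\ P m /\ forall y, In y L -> P y -> lex_le (f m) (f y).
Proof.
  induction L as [|a L IH]; intros [x [Hx Px]]; [destruct Hx|].
  destruct (classic (exists x, In x L /\ P x)) as [He|Hn].
  - destruct (IH He) as [m [Hm [Pm Hmin]]].
    destruct (classic (P a /\ lex_lt (f a) (f m))) as [[Pa Hlt]|Hno].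
    + exists a. split; [left; auto|split; auto]. intros y [ <- |Hy] Py; [right; auto|].
      left. eapply lex_lt_le_trans; eauto.
    + exists m. split; [right; auto|split; auto]. intros y [ <- |Hy] Py; auto.
      apply not_lex_lt. intros Hl; apply Hno; auto.
  - destruct Hx as [ <- |Hx]; [|exfalso; apply Hn; eauto].
    exists a. split; [left; auto|split; auto]. intros y [ <- |Hy] Py; [right; auto|].
    exfalso; apply Hn; eauto.
Qed.

Lemma last_cons_shift {A : Type} (a : A) (l : list A) (d : A) : last (a :: l) d = last l a.
Proof.
  revert a d. induction l as [|b l IH]; intros a d; [reflexivity|].
  change (last (b :: l) d = last (b :: l) a). rewrite !IH. reflexivity.
Qed.

Lemma last_app_shift {A : Type} (p q : list A) (x : A) : last (p ++ q) x = last q (last p x).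
Proof.
  revert x. induction p as [|a p IH]; intros x; [reflexivity|].
  change ((a :: p) ++ q) with (a :: (p ++ q)). rewrite !last_cons_shift. apply IH.
Qed.

Lemma chain_app (E : point -> point -> Prop) (x : point) (p q : list point) :
  chain E x p -> chain E (last p x) q -> chain E x (p ++ q).
Proof.
  revert x. induction p as [|a p IH]; intros x Hp Hq; [exact Hq|].
  destruct Hp as [H1 H2]. split; auto. apply IH; auto. rewrite last_cons_shift in Hq. auto.
Qed.

Lemma is_path_app (E : point -> point -> Prop) (u w v : point) (p q : list point) :
  is_path E u w p -> is_path E w v q -> is_path E u v (p ++ q).
Proof.
  intros [H1 H2] [H3 H4]. split.
  - apply chain_app; auto. rewrite H2; auto.
  - rewrite last_app_shift, H2; auto.
Qed.

Lemma is_path_edge (E : point -> point -> Prop) (u v : point) : E u v -> is_path E u v [v].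
Proof. intros H. repeat split; auto. Qed.

Lemma path_cost_app (c : point -> point -> R) (u : point) (p q : list point) :
  path_cost c u (p ++ q) = path_cost c u p + path_cost c (last p u) q.
Proof.
  revert u. induction p as [|a p IH]; intros u; [simpl; ring|].
  change ((a :: p) ++ q) with (a :: (p ++ q)). simpl path_cost at 1 2.
  rewrite IH, last_cons_shift. ring.
Qed.

Lemma path_cost_is_path_app (E : point -> point -> Prop) (c : point -> point -> R)
  (u w : point) (p q : list point) :
  is_path E u w p -> path_cost c u (p ++ q) = path_cost c u p + path_cost c w q.
Proof. intros [_ Hw]. rewrite path_cost_app, Hw. reflexivity. Qed.

Lemma path_compose (G H : point -> point -> Prop) (cG cH : point -> point -> R) (r : R) :
  (forall a b, G a b -> exists q, is_path H a b q /\ path_cost cH a q <= r * cG a b) ->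
  forall p u v, is_path G u v p ->
  exists q, is_path H u v q /\ path_cost cH u q <= r * path_cost cG u p.
Proof.
  intros Hedge p. induction p as [|a p IH]; intros u v [Hc Hl].
  - exists []. simpl in Hl. subst. split; [split; simpl; auto|simpl; lra].
  - destruct Hc as [Hua Hc]. rewrite last_cons_shift in Hl.
    destruct (Hedge u a Hua) as [q1 [Hq1 L1]].
    destruct (IH a v) as [q2 [Hq2 L2]]; [split; auto|].
    exists (q1 ++ q2). split; [eapply is_path_app; eauto|].
    rewrite (path_cost_is_path_app _ cH _ _ _ q2 Hq1). simpl. lra.
Qed.

Lemma filter_length_le {A : Type} (f g : A -> bool) (l : list A) :
  (forall x, In x l -> f x = true -> g x = true) ->
  (length (filter f l) <= length (filter g l))%nat.
Proof.
  induction l as [|b l IH]; intros H; simpl; auto.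
  assert (IH' : (length (filter f l) <= length (filter g l))%nat)
    by (apply IH; intros; apply H; simpl; auto).
  destruct (f b) eqn:Ef.
  - rewrite (H b (or_introl eq_refl) Ef). simpl. lia.
  - destruct (g b); simpl; lia.
Qed.

Lemma filter_length_lt {A : Type} (f g : A -> bool) (l : list A) (y : A) :
  (forall x, In x l -> f x = true -> g x = true) -> In y l -> f y = false -> g y = true ->
  (length (filter f l) < length (filter g l))%nat.
Proof.
  induction l as [|a l IH]; intros Hfg Hy Hf Hg; [destruct Hy|].
  assert (Hle : (length (filter f l) <= length (filter g l))%nat)
    by (apply filter_length_le; intros; apply Hfg; simpl; auto).
  simpl. destruct Hy as [<-|Hy].
  - rewrite Hf, Hg. simpl. lia.
  - assert (IH' : (length (filter f l) < length (filter g l))%nat)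
      by (apply IH; auto; intros; apply Hfg; simpl; auto).
    destruct (f a) eqn:Ef.
    + rewrite (Hfg a (or_introl eq_refl) Ef). simpl. lia.
    + destruct (g a); simpl; lia.
Qed.

Lemma list_measure_ind {A : Type} (f : A -> R) (L : list A) (P : A -> Prop) :
  (forall x, (forall y, In y L -> f y < f x -> P y) -> P x) -> forall x, P x.
Proof.
  intros Hstep.
  set (rank := fun x => length (filter (fun y => if Rlt_dec (f y) (f x) then true else false) L)).
  assert (Hrank : forall n x, (rank x < n)%nat -> P x).
  { induction n as [|n IH]; intros x Hx; [lia|].
    apply Hstep. intros y Hy Hlt. apply IH.
    enough ((rank y < rank x)%nat) by lia.
    apply (filter_length_lt _ _ _ y); auto.
    - intros z _. do 2 destruct Rlt_dec; auto; lra.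
    - destruct Rlt_dec; auto; lra.
    - destruct Rlt_dec; auto; lra. }
  intros x. apply (Hrank (S (rank x))). lia.
Qed.

Lemma Rpower_add_le (a b beta : R) : 0 < a -> 0 < b -> 1 <= beta ->
  Rpower a beta + Rpower b beta <= Rpower (a + b) beta.
Proof.
  intros Ha Hb Hbeta.
  assert (Ex : forall x, 0 < x -> Rpower x beta = x * Rpower x (beta - 1)).
  { intros x Hx. replace beta with (1 + (beta - 1)) at 1 by ring. rewrite Rpower_plus, Rpower_1; auto. }
  rewrite (Ex a), (Ex b), (Ex (a + b)) by lra.
  assert (Pa : Rpower a (beta - 1) <= Rpower (a + b) (beta - 1)) by (apply Rle_Rpower_l; lra).
  assert (Pb : Rpower b (beta - 1) <= Rpower (a + b) (beta - 1)) by (apply Rle_Rpower_l; lra).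
  nra.
Qed.

Lemma path_power_le_length (H : point -> point -> Prop) (beta : R) :
  (forall a b, H a b -> a <> b) -> 1 <= beta ->
  forall q u, q <> [] -> chain H u q ->
  path_power beta u q <= Rpower (path_length u q) beta /\ 0 < path_length u q.
Proof.
  intros Hne Hb q. induction q as [|y q IH]; intros u Hq Hc; [congruence|].
  destruct Hc as [Huy Hc]. pose proof (dist_pos u y (Hne _ _ Huy)) as Hd.
  destruct q as [|z q].
  - unfold path_power, path_length. simpl. rewrite !Rplus_0_r. split; lra.
  - destruct (IH y) as [P1 P2]; [congruence|auto|].
    unfold path_power, path_length in *. simpl path_cost at 1 3. simpl path_cost in P1, P2.
    split; [|lra].
    eapply Rle_trans; [apply Rplus_le_compat_l; exact P1|]. apply Rpower_add_le; auto.
Qed.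

Section YaoYao.

Variables (V : list point) (k : nat) (alpha : R) (ID : point -> nat).
Hypothesis ID_inj : forall u v, In u V -> In v V -> ID u = ID v -> u = v.

Local Notation YY := (yy_edge V k alpha ID).

Lemma yy_edge_neq (u v : point) : YY u v -> u <> v.
Proof. intros [[[[_ [_ [H _]]] _] _]|[[[_ [_ [H _]]] _] _]]; auto. Qed.

Lemma yy_dedge_out_unique (u x y : point) :
  yy_dedge V k alpha ID u x -> yy_dedge V k alpha ID u y -> same_cone k alpha u x y -> x = y.
Proof.
  intros [[Hux Hxmin] _] [[Huy Hymin] _] Hc.
  pose proof Hux as [HuV [HxV [Hne_x _]]]. pose proof Huy as [_ [HyV [Hne_y _]]].
  apply (eID_inj V ID u x y); auto.
  apply lex_le_antisym; [apply Hxmin|apply Hymin, same_cone_sym]; auto.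
Qed.

Lemma yy_dedge_in_unique (u x y : point) :
  yy_dedge V k alpha ID x u -> yy_dedge V k alpha ID y u -> same_cone k alpha u x y -> x = y.
Proof.
  intros [Hxu Hxmin] [Hyu Hymin] Hc.
  pose proof Hxu as [[HxV [HuV [Hne_x _]]] _]. pose proof Hyu as [[HyV [_ [Hne_y _]]] _].
  apply (eID_inj V ID u x y); auto.
  rewrite (eID_sym ID u x), (eID_sym ID u y).
  apply lex_le_antisym; [apply Hxmin|apply Hymin, same_cone_sym]; auto.
Qed.

(* Each neighbour [v] of [u] in YY_k gets a slot in [0, 2k): the index of the cone of [u]
   containing [v], shifted by [k] when the edge is only directed towards [u]. *)
Lemma yy_max_degree : (0 < k)%nat -> max_degree_le V YY (2 * k).
Proof.
  intros Hk u Hu L HL HE.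
  set (idx := fun v => epsilon (inhabits 0%nat) (fun i => in_cone k alpha u i v)).
  assert (Hidx : forall v, In v L -> in_cone k alpha u (idx v) v).
  { intros v Hv. apply (epsilon_spec (inhabits 0%nat) (fun i => in_cone k alpha u i v)).
    apply cone_exists; auto. apply yy_edge_neq, HE, Hv. }
  set (slot := fun v => if excluded_middle_informative (yy_dedge V k alpha ID u v)
                        then idx v else (k + idx v)%nat).
  assert (Hslot_lt : forall v, In v L -> (slot v < 2 * k)%nat).
  { intros v Hv. destruct (Hidx v Hv) as [Hi _]. unfold slot. destruct excluded_middle_informative; lia. }
  assert (Hslot_inj : forall x y, In x L -> In y L -> slot x = slot y -> x = y).
  { intros x y Hx Hy E.
    assert (Hsc : idx x = idx y -> same_cone k alpha u x y).
    { intros Ei. exists (idx x). split; [|rewrite Ei]; apply Hidx; auto. }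
    pose proof (proj1 (Hidx x Hx)). pose proof (proj1 (Hidx y Hy)).
    unfold slot in E.
    destruct excluded_middle_informative as [Dx|Dx], excluded_middle_informative as [Dy|Dy]; try lia.
    - apply (yy_dedge_out_unique u); auto.
    - apply (yy_dedge_in_unique u); [destruct (HE x Hx)|destruct (HE y Hy)|apply Hsc; lia]; tauto. }
  rewrite <- (length_map slot L).
  replace (2 * k)%nat with (length (seq 0 (2 * k))) by apply length_seq.
  apply NoDup_incl_length.
  - apply NoDup_map_NoDup_ForallPairs; auto.
  - intros s Hs. apply in_map_iff in Hs. destruct Hs as [v [<- Hv]]. apply in_seq.
    specialize (Hslot_lt v Hv). lia.
Qed.

Lemma yao_edge_exists (u v : point) : udg_edge V u v ->
  exists w, yao_edge V k alpha ID u w /\ (w = v \/ same_cone k alpha u v w) /\ dist u w <= dist u v.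
Proof.
  intros Huv.
  destruct (list_argmin (fun w => udg_edge V u w /\ (w = v \/ same_cone k alpha u v w)) (eID ID u) V)
    as [w [HwV [[Huw Hwv] Hwmin]]].
  { exists v. pose proof Huv as [_ [HvV _]]. auto. }
  exists w. split; [split; auto|split; auto].
  - intros w' Huw' Hsc. apply Hwmin; [exact (proj1 (proj2 Huw'))|]. split; auto.
    right. destruct Hwv as [<-|Hwv]; auto. eapply same_cone_trans; eauto.
  - apply (eID_le_dist ID). apply Hwmin; [exact (proj1 (proj2 Huv))|auto].
Qed.

Lemma yao_edge_blocked (u w : point) :
  yao_edge V k alpha ID u w -> ~ yy_dedge V k alpha ID u w ->
  exists x, yy_dedge V k alpha ID x w /\ same_cone k alpha w u x /\ lex_lt (eID ID x w) (eID ID u w).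
Proof.
  intros Hyao Hnyy.
  assert (Hx0 : exists x0, yao_edge V k alpha ID x0 w /\ same_cone k alpha w u x0
                           /\ lex_lt (eID ID x0 w) (eID ID u w)).
  { apply NNPP. intros Hn. apply Hnyy. split; auto. intros x Hx Hsc.
    apply not_lex_lt. intros Hlt. apply Hn. exists x; auto. }
  destruct Hx0 as [x0 [Hyx0 [Hscx0 Hltx0]]].
  destruct (list_argmin (fun x => yao_edge V k alpha ID x w /\ same_cone k alpha w u x) (fun x => eID ID x w) V)
    as [x [HxV [[Hyx Hscx] Hxmin]]].
  { exists x0. split; [exact (proj1 (proj1 Hyx0))|auto]. }
  exists x. split; [split; auto|split; auto].
  - intros y Hy Hsc. apply Hxmin; [exact (proj1 (proj1 Hy))|]. split; auto. eapply same_cone_trans; eauto.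
  - apply (lex_le_lt_trans _ (eID ID x0 w)); [|exact Hltx0].
    apply Hxmin; [exact (proj1 (proj1 Hyx0))|auto].
Qed.

Section Spanner.

Variables lambda t : R.
Hypothesis k_ge2 : (2 <= k)%nat.
Hypothesis V_civilized : civilized lambda V.

Local Notation c := (cos (2 * PI / INR k) - sin (2 * PI / INR k)).

Hypothesis c_pos : 0 < c.
Hypothesis tc_ge1 : 1 <= t * c.
Hypothesis detour_affordable : t * (1 - c) <= lambda * (t * c - 1).

Definition yy_spans (a b : point) : Prop :=
  exists q, is_path YY a b q /\ path_length a q <= t * dist a b.

Lemma t_pos : 0 < t.
Proof. nra. Qed.

Lemma yao_head_spanned (u v w : point) :
  (forall a b, udg_edge V a b -> dist a b < dist u v -> yy_spans a b) ->
  yao_edge V k alpha ID u w -> dist u w <= dist u v ->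
  exists q, is_path YY u w q /\ path_length u q <= t * c * dist u w.
Proof.
  intros IH Hyao Hd.
  pose proof Hyao as [[HuV [HwV [Huw Huw1]]] _].
  pose proof (dist_pos u w Huw) as Hpuw.
  pose proof (cone_const_le1 k k_ge2) as Hc1. pose proof t_pos as Ht.
  destruct (classic (yy_dedge V k alpha ID u w)) as [Hyy|Hnyy].
  { exists [w]. split; [apply is_path_edge; left; exact Hyy|]. unfold path_length; simpl. nra. }
  destruct (yao_edge_blocked u w Hyao Hnyy) as [x [Hxw [Hsc Hlt]]].
  pose proof Hxw as [[[HxV [_ [Hxw_ne _]]] _] _].
  assert (Hxu : u <> x) by (intros <-; exact (lex_lt_irrefl _ Hlt)).
  assert (Hdwx : dist w x <= dist w u).
  { rewrite (dist_sym w x), (dist_sym w u). apply (eID_le_dist ID). left; exact Hlt. }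
  assert (Hlam : lambda <= dist w x) by (apply V_civilized; auto).
  pose proof (dist_pos w x (not_eq_sym Hxw_ne)) as Hpwx.
  pose proof (cone_dist k alpha w u x k_ge2 Hsc Hdwx) as Hux.
  rewrite (dist_sym w u) in Hux.
  destruct (IH u x) as [q1 [Hq1 L1]].
  { repeat split; auto. nra. }
  { nra. }
  exists (q1 ++ [w]). split.
  { apply (is_path_app _ u x w); auto. apply is_path_edge. left; exact Hxw. }
  unfold path_length in *. rewrite (path_cost_is_path_app _ _ _ _ _ [w] Hq1). simpl.
  rewrite (dist_sym x w).
  assert (Hdetour : t * (1 - c) * dist u w <= (t * c - 1) * dist w x).
  { assert (t * (1 - c) * dist u w <= t * (1 - c)) by (assert (0 <= t * (1 - c)) by nra; nra).
    nra. }
  nra.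
Qed.

Lemma yao_tail_spanned (u v w : point) :
  (forall a b, udg_edge V a b -> dist a b < dist u v -> yy_spans a b) ->
  udg_edge V u v -> udg_edge V u w -> (w = v \/ same_cone k alpha u v w) -> dist u w <= dist u v ->
  exists q, is_path YY w v q /\ path_length w q <= t * (dist u v - c * dist u w).
Proof.
  intros IH Huv Huw Hwv Hd.
  pose proof (cone_const_le1 k k_ge2) as Hc1. pose proof t_pos as Ht.
  destruct (classic (w = v)) as [<-|Hne].
  { exists []. split; [split; simpl; auto|]. unfold path_length; simpl.
    pose proof (dist_nonneg u w). apply Rmult_le_pos; [lra|]. nra. }
  destruct Hwv as [E|Hsc]; [contradiction|].
  pose proof Huv as [_ [HvV [_ Huv1]]]. pose proof Huw as [_ [HwV [Huw_ne _]]].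
  pose proof (dist_pos u w Huw_ne).
  pose proof (cone_dist k alpha u v w k_ge2 Hsc Hd) as Hvw. rewrite (dist_sym v w) in Hvw.
  destruct (IH w v) as [q [Hq Lq]].
  { repeat split; auto. nra. }
  { nra. }
  exists q. split; auto. nra.
Qed.

Lemma udg_edge_spanned (u v : point) : udg_edge V u v -> yy_spans u v.
Proof.
  revert u v.
  enough (H : forall e : point * point, udg_edge V (fst e) (snd e) -> yy_spans (fst e) (snd e))
    by (intros u v; exact (H (u, v))).
  apply (list_measure_ind (fun e => dist (fst e) (snd e)) (list_prod V V)
           (fun e => udg_edge V (fst e) (snd e) -> yy_spans (fst e) (snd e))).
  intros [u v] IH Huv; simpl in *.
  assert (IH' : forall a b, udg_edge V a b -> dist a b < dist u v -> yy_spans a b).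
  { intros a b Hab Hlt. apply (IH (a, b)); auto. destruct Hab as [Ha [Hb _]]. apply in_prod; auto. }
  destruct (yao_edge_exists u v Huv) as [w [Hyao [Hwv Hd]]].
  destruct (yao_head_spanned u v w IH' Hyao Hd) as [q1 [Hq1 L1]].
  destruct (yao_tail_spanned u v w IH' Huv (proj1 Hyao) Hwv Hd) as [q2 [Hq2 L2]].
  exists (q1 ++ q2). split; [eapply is_path_app; eauto|].
  unfold path_length in *. rewrite (path_cost_is_path_app _ _ _ _ _ q2 Hq1). lra.
Qed.

Lemma yy_length_spanner : length_spanner V YY (udg_edge V) t.
Proof.
  intros u v _ _ p Hp. exact (path_compose _ _ dist dist t udg_edge_spanned p u v Hp).
Qed.

Lemma yy_power_stretch (beta : R) : 1 <= beta ->
  power_stretch V beta YY (udg_edge V) (Rpower t beta).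
Proof.
  intros Hbeta u v _ _ p Hp. refine (path_compose _ _ _ _ _ _ p u v Hp).
  intros a b Hab. destruct (udg_edge_spanned a b Hab) as [q [Hq Lq]]. exists q. split; auto.
  pose proof Hab as [_ [_ [Hab_ne _]]].
  assert (Hq_ne : q <> []) by (intros ->; destruct Hq as [_ E]; exact (Hab_ne E)).
  destruct (path_power_le_length YY beta yy_edge_neq Hbeta q a Hq_ne (proj1 Hq)) as [P1 P2].
  change (path_power beta a q <= Rpower t beta * Rpower (dist a b) beta).
  pose proof (dist_pos a b Hab_ne). pose proof t_pos.
  rewrite Rpower_mult_distr by lra.
  eapply Rle_trans; [exact P1|]. apply Rle_Rpower_l; lra.
Qed.

End Spanner.

End YaoYao.

Lemma yao_parameters (lambda eps c : R) : 0 < lambda -> 0 < eps ->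
  c = (lambda + eps + 1) / ((lambda + 1) * (eps + 1)) ->
  0 < c /\ 1 <= (1 + eps) * c /\ (1 + eps) * (1 - c) <= lambda * ((1 + eps) * c - 1).
Proof.
  intros Hl He ->.
  assert (Htc : (1 + eps) * ((lambda + eps + 1) / ((lambda + 1) * (eps + 1)))
                = (lambda + eps + 1) / (lambda + 1)) by (field; lra).
  rewrite Htc. split; [|split].
  - apply Rdiv_lt_0_compat; nra.
  - apply Rmult_le_reg_r with (lambda + 1); [lra|]. field_simplify; lra.
  - right. field. lra.
Qed.

Theorem corollary1 (lambda eps beta alpha : R) (k : nat) (V : list point) (ID : point -> nat) :
  0 < lambda -> 0 < eps -> (8 < k)%nat ->
  cos (2 * PI / INR k) - sin (2 * PI / INR k) =
    (lambda + eps + 1) / ((lambda + 1) * (eps + 1)) ->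
  2 <= beta <= 5 ->
  NoDup V ->
  connected V ->
  civilized lambda V ->
  (forall u v, In u V -> In v V -> ID u = ID v -> u = v) ->
  max_degree_le V (yy_edge V k alpha ID) (2 * k) /\
  length_spanner V (yy_edge V k alpha ID) (udg_edge V) (1 + eps) /\
  power_stretch V beta (yy_edge V k alpha ID) (udg_edge V) (Rpower (1 + eps) beta).
Proof.
  intros Hl He Hk Hc Hbeta _ _ Hciv Hinj.
  destruct (yao_parameters lambda eps _ Hl He Hc) as [Hc0 [Htc Hdetour]].
  split; [|split].
  - apply yy_max_degree; [exact Hinj|lia].
  - apply (yy_length_spanner V k alpha ID Hinj lambda); auto; lia.
  - apply (yy_power_stretch V k alpha ID Hinj lambda); auto; [lia|lra].
Qed.
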